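(* Let $R$ be a $v$-domain. Then every nonzero finitely generated ideal of $R$ is $v$-basic.
   Context: For a domain $R$ with quotient field $K$: $I^{-1}=(R:I)=\{x\in K:xI\subseteq R\}$, $I_v=(I^{-1})^{-1}$. $R$ is a $v$-domain if every nonzero finitely generated ideal $I$ satisfies $(II^{-1})_v=R$. For a nonzero ideal $I$, an ideal $J\subseteq I$ is a $v$-reduction of $I$ if $(JI^n)_v=(I^{n+1})_v$ for some integer $n\ge0$; $I$ is $v$-basic if every $v$-reduction $J$ of $I$ satisfies $J_v=I_v$. *)

From HB Require Import structures.
From mathcomp Require Import all_boot all_order all_algebra.
Set Implicit Arguments. Unset Strict Implicit. Unset Printing Implicit Defensive.
Import GRing.Theory.
Local Open Scope ring_scope.

Section VOps.
Variable R : idomainType.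
Local Notation K := {fraction R}.

Definition Rsub : K -> Prop := fun x => exists a : R, x = (@tofrac R a).

Definition img (I : R -> Prop) : K -> Prop :=
  fun x => exists2 a : R, I a & x = (@tofrac R a).

Definition colon (A : K -> Prop) : K -> Prop :=
  fun x => forall a, A a -> Rsub (x * a).

Definition vclos (A : K -> Prop) : K -> Prop := colon (colon A).

(* product AB: additive closure of the products ab, a in A, b in B
   (the usual product when A, B are R-submodules of K) *)
Inductive prodS (A B : K -> Prop) : K -> Prop :=
| prodS0 : prodS A B 0
| prodS_step a b w : A a -> B b -> prodS A B w -> prodS A B (a * b + w).

Fixpoint powS (A : K -> Prop) (n : nat) : K -> Prop :=
  match n with
  | O => Rsub
  | S m => prodS A (powS A m)
  end.

Definition seteq (A B : K -> Prop) : Prop := forall x, A x <-> B x.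

Definition is_ideal (I : R -> Prop) : Prop :=
  [/\ I 0, (forall a b, I a -> I b -> I (a + b)) & (forall r a, I a -> I (r * a))].

Definition nonzero_ideal (I : R -> Prop) : Prop := exists2 a, I a & a != 0.

Definition fin_gen (I : R -> Prop) : Prop :=
  exists s : seq R, forall a, I a <->
    exists c : seq R, size c = size s /\ a = \sum_(i < size s) c`_i * s`_i.

Definition v_domain : Prop :=
  forall I, is_ideal I -> nonzero_ideal I -> fin_gen I ->
    seteq (vclos (prodS (img I) (colon (img I)))) Rsub.

Definition v_reduction (J I : R -> Prop) : Prop :=
  is_ideal J /\ (forall a, J a -> I a) /\
  exists n : nat, seteq (vclos (prodS (img J) (powS (img I) n)))
                        (vclos (powS (img I) n.+1)).

Definition v_basic (I : R -> Prop) : Prop :=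
  forall J, v_reduction J I -> seteq (vclos (img J)) (vclos (img I)).

End VOps.

From HB Require Import structures.
From mathcomp Require Import all_boot all_order all_algebra.
Set Implicit Arguments. Unset Strict Implicit. Unset Printing Implicit Defensive.
Import GRing.Theory.
Local Open Scope ring_scope.

(* In a v-domain every nonzero finitely generated ideal I is v-invertible,
   (I I^-1)_v = R, and v-invertible modules cancel under the v-operation:
   (A I)^-1 <= (B I)^-1 forces A^-1 <= B^-1.  If (J I^n)_v = (I^(n+1))_v then
   (J I^n)^-1 = (I I^n)^-1, and cancelling I n times gives J^-1 = I^-1, that is
   J_v = I_v. *)

Section VCancellation.
Variable R : idomainType.
Local Notation K := {fraction R}.
Implicit Types (A B I P : K -> Prop) (x y : K).

Lemma Rsub1 : Rsub (1 : K). Proof. by exists 1; rewrite tofrac1. Qed.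

Lemma RsubD x y : Rsub x -> Rsub y -> Rsub (x + y).
Proof. by move=> [a ->] [b ->]; exists (a + b); rewrite tofracD. Qed.

Lemma RsubM x y : Rsub x -> Rsub y -> Rsub (x * y).
Proof. by move=> [a ->] [b ->]; exists (a * b); rewrite tofracM. Qed.

Lemma colon0 A : colon A 0.
Proof. by move=> a _; rewrite mul0r; exists 0; rewrite tofrac0. Qed.

Lemma colonD A x y : colon A x -> colon A y -> colon A (x + y).
Proof. by move=> hx hy a Aa; rewrite mulrDl; apply: RsubD; [apply: hx | apply: hy]. Qed.

Lemma colonS A B : (forall x, A x -> B x) -> forall x, colon B x -> colon A x.
Proof. by move=> sAB x hx a Aa; apply/hx/sAB. Qed.

Lemma colon_Rsub x : colon (@Rsub R) x <-> Rsub x.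
Proof.
split=> [h | Rx a Ra]; last exact: RsubM.
by have := h 1 Rsub1; rewrite mulr1.
Qed.

Lemma colon_prodS A B x :
  colon (prodS A B) x <-> (forall a, A a -> colon B (x * a)).
Proof.
split=> [h a Aa b Bb | h w].
  by have := h _ (prodS_step Aa Bb (prodS0 A B)); rewrite addr0 mulrA.
elim=> {w} [|a b w Aa Bb _ IH]; first by rewrite mulr0; exists 0; rewrite tofrac0.
by rewrite mulrDr mulrA; apply: RsubD => //; apply: h.
Qed.

Lemma colon_prodS_Rsub A x : colon (prodS A (@Rsub R)) x <-> colon A x.
Proof.
split=> [/colon_prodS h a Aa | h]; first exact/colon_Rsub/h.
by apply/colon_prodS => a Aa; apply/colon_Rsub/h.
Qed.

Lemma colon_prodSA A I P x :
  colon (prodS A (prodS I P)) x <-> colon (prodS (prodS A I) P) x.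
Proof.
split=> /colon_prodS h; apply/colon_prodS.
  move=> w; elim=> {w} [|a i w Aa Ii _ IH]; first by rewrite mulr0; apply: colon0.
  rewrite mulrDr mulrA; apply: colonD => //.
  by move/colon_prodS: (h a Aa); apply.
move=> a Aa; apply/colon_prodS => i Ii; rewrite -mulrA; apply: h.
by rewrite -[a * i]addr0; apply: prodS_step => //; apply: prodS0.
Qed.

Lemma sub_vclos A x : A x -> vclos A x.
Proof. by move=> Ax t Ct; rewrite mulrC; apply: Ct. Qed.

Lemma colon_vclos A x : colon (vclos A) x <-> colon A x.
Proof.
split=> [|h]; last exact: sub_vclos.
by apply: colonS => y; apply: sub_vclos.
Qed.

Lemma colon_vclos_eq A B :
  seteq (vclos A) (vclos B) -> forall x, colon A x -> colon B x.
Proof.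
move=> eqAB x /colon_vclos hx; apply/colon_vclos.
by apply: colonS hx => y /eqAB.
Qed.

(* The condition (I I^-1)_v = R, stated as (I I^-1)^-1 being contained in R
   (the reverse inclusion always holds). *)
Definition v_invertible I := forall y, colon (prodS I (colon I)) y -> Rsub y.

Lemma v_invertible_vclos I : seteq (vclos (prodS I (colon I))) (@Rsub R) -> v_invertible I.
Proof.
move=> eqR y /colon_vclos hy; apply/colon_Rsub.
by apply: colonS hy => x /eqR.
Qed.

Lemma colon_prodS_cancel I A B : v_invertible I ->
  (forall x, colon (prodS A I) x -> colon (prodS B I) x) ->
  forall x, colon A x -> colon B x.
Proof.
move=> invI sAB x hx b Bb; apply: invI; apply/colon_prodS => i Ii t It.
(* x t lies in (A I)^-1 since (x t)(a j) = (x a)(t j), hence in (B I)^-1. *)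
have xt_AI : colon (prodS A I) (x * t).
  apply/colon_prodS => a Aa j Ij.
  rewrite -mulrA mulrACA.
  by apply: RsubM; [apply: hx | apply: It].
move/sAB/colon_prodS/(_ b Bb)/(_ i Ii): xt_AI.
by rewrite [x * b * i * t]mulrAC (mulrAC x b).
Qed.

Lemma colon_prodS_pow_cancel I n A B : v_invertible I ->
  (forall x, colon (prodS A (powS I n)) x -> colon (prodS B (powS I n)) x) ->
  forall x, colon A x -> colon B x.
Proof.
move=> invI; elim: n A B => [|n IHn] A B sAB x.
  by move=> /colon_prodS_Rsub /sAB /colon_prodS_Rsub.
apply: (colon_prodS_cancel invI); apply: IHn => y.
by move=> /colon_prodSA /sAB /colon_prodSA.
Qed.

End VCancellation.

Theorem proposition1p6 (R : idomainType) :
  v_domain R ->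
  forall I : R -> Prop, is_ideal I -> nonzero_ideal I -> fin_gen I -> v_basic I.
Proof.
move=> vdomR I idI nzI fgI J [_ [sJI [n eqJI]]].
have invI : v_invertible (img I) by apply/v_invertible_vclos/vdomR.
have colonJI : forall x, colon (img J) x -> colon (img I) x.
  by apply: (colon_prodS_pow_cancel (n := n) invI); apply: colon_vclos_eq.
have colonIJ : forall x, colon (img I) x -> colon (img J) x.
  by apply: colonS => x [a Ja ->]; exists a => //; apply: sJI.
by move=> x; split=> hx t ht; apply: hx; [apply: colonIJ | apply: colonJI].
Qed.
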